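(* Let $K$ be a finite group with trivial centre. Suppose there exist subgroups $X$, $Y$ of $\mathrm{Aut}(K)$ such that $X\cap Y = 1$ and $XY = X\,\mathrm{Inn}(K) = Y\,\mathrm{Inn}(K)$. Then there exists a skew left brace with additive group isomorphic to $K$ whose multiplicative group is isomorphic to a subdirect product of $X$ and $Y$.
   Context: A skew left brace is a set $B$ with two group structures $(B,+)$ (not necessarily abelian) and $(B,\cdot)$ such that $a(b+c) = ab - a + ac$ for all $a,b,c\in B$; its additive group is $(B,+)$ and its multiplicative group is $(B,\cdot)$. $\mathrm{Inn}(K)$ is the group of inner automorphisms of $K$. A subdirect product of groups $X$ and $Y$ is a subgroup $W\le X\times Y$ whose projections onto $X$ and onto $Y$ are both surjective. *)

From HB Require Import structures.
From mathcomp Require Import all_boot all_fingroup all_solvable.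
Set Implicit Arguments. Unset Strict Implicit. Unset Printing Implicit Defensive.
Local Open Scope group_scope.

Definition Inn (gT : finGroupType) (K : {group gT}) : {set {perm gT}} :=
  conj_aut K @* K.

Definition group_law (T : Type) (op : T -> T -> T) (e : T) (inv : T -> T) :=
  [/\ associative op, left_id e op, right_id e op,
      left_inverse e inv op & right_inverse e inv op].

Definition is_skew_brace (T : Type)
  (add : T -> T -> T) (zero : T) (opp : T -> T)
  (mul : T -> T -> T) (one : T) (inv : T -> T) :=
  [/\ group_law add zero opp, group_law mul one inv &
      (forall a b c, mul a (add b c) = add (add (mul a b) (opp a)) (mul a c))].

Definition iso_to_group (T : Type) (op : T -> T -> T)
  (hT : finGroupType) (H : {set hT}) :=
  exists f : T -> hT,
    [/\ injective f, (forall a, f a \in H), (forall h, h \in H -> exists a, f a = h)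
      & (forall a b, f (op a b) = f a * f b)].

Definition subdirect (aT bT : finGroupType) (X : {set aT}) (Y : {set bT})
  (W : {group (aT * bT)}) :=
  [/\ W \subset setX X Y, fst @: W = X & snd @: W = Y].

From HB Require Import structures.
From mathcomp Require Import all_boot all_fingroup all_solvable.
Set Implicit Arguments. Unset Strict Implicit. Unset Printing Implicit Defensive.
Local Open Scope group_scope.

(* Let N = Inn K. The pairs (x, y) in X x Y with x y^-1 in N form a subdirect
   product W of X and Y, and since X :&: Y = 1 and N \subset X Y the map
   (x, y) |-> x y^-1 is a bijection from W onto N, which is isomorphic to K
   because 'Z(K) = 1. Transporting the group law of W to K along this
   bijection gives the multiplication of the brace: if (x, y) corresponds to
   a then a o b corresponds to x b y^-1, and the brace identity
   x (b c) y^-1 = (x b y^-1) (x y^-1)^-1 (x c y^-1) is immediate. *)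

Section InnerAutomorphisms.

Variables (gT : finGroupType) (K : {group gT}).

Canonical Inn_group := Eval hnf in [group of Inn K].

Lemma conj_aut_Inn k : k \in K -> conj_aut K k \in Inn K.
Proof. by move=> Kk; rewrite mem_morphim // (subsetP (normG K)). Qed.

Lemma conj_autJ a k :
  a \in Aut K -> k \in K -> conj_aut K k ^ a = conj_aut K (a k).
Proof.
move=> AutKa Kk; have Kak : a k \in K by exact: Aut_closed.
have AutK_Inn := subsetP (Aut_conj_aut K K).
apply: (eq_Aut _ (AutK_Inn _ (conj_aut_Inn Kak))) => [|z Kz].
  by rewrite groupJ // AutK_Inn ?conj_aut_Inn.
have Kaz : a^-1 z \in K by rewrite Aut_closed ?groupV.
rewrite conjgE !permM !conj_autE //.
change (autm AutKa (a^-1 z ^ k) = z ^ autm AutKa k).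
by rewrite morphJ //= autmE permKV.
Qed.

Lemma Aut_norm_Inn : Aut K \subset 'N(Inn K).
Proof.
apply/subsetP=> a AutKa; rewrite inE.
apply/subsetP=> _ /imsetP[_ /morphimP[k _ Kk ->] ->].
by rewrite conj_autJ // conj_aut_Inn ?Aut_closed.
Qed.

Lemma conj_aut_inj : 'Z(K) = 1 -> {in K &, injective (conj_aut K)}.
Proof.
move=> ZK1 k1 k2 Kk1 Kk2 eq_k12; have nKK := subsetP (normG K).
have Kk12 : k1 * k2^-1 \in K by rewrite groupM ?groupV.
apply/eqP; rewrite eq_mulgV1; apply/eqP/set1gP.
rewrite -ZK1 inE Kk12 -(ker_conj_aut K).
apply/kerP; first exact: nKK.
by rewrite morphM ?morphV ?nKK ?groupV //= eq_k12 mulgV.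
Qed.

Definition inn_subg (a : subg_of K) := conj_aut K (sgval a).

Lemma inn_subgM : {morph inn_subg : a b / a * b}.
Proof. by move=> a b; rewrite /inn_subg conj_aut_morphM // (subsetP (normG K)) ?subgP. Qed.

Lemma inn_subg_inj : 'Z(K) = 1 -> injective inn_subg.
Proof. by move=> ZK1 a b /(conj_aut_inj ZK1) eq_ab; apply/subg_inj/eq_ab; apply: subgP. Qed.

Lemma im_inn_subg : inn_subg @: [set: subg_of K] = Inn K.
Proof.
rewrite -[inn_subg]/(conj_aut K \o sgval) imset_comp.
by rewrite -morphimEdom im_sgval /Inn morphimEsub ?normG.
Qed.

Lemma iso_subg : iso_to_group (T := subg_of K) *%g K.
Proof.
exists sgval; split=> [||h Kh|] //; [exact: subg_inj | exact: subgP |].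
by exists (subg K h); rewrite subgK.
Qed.

End InnerAutomorphisms.

Section FactorizationPairs.

Variables (hT : finGroupType) (X Y N : {group hT}).

Definition pair_div (w : hT * hT) := w.1 * w.2^-1.

Definition fact_pairs : {set hT * hT} :=
  setX X Y :&: [set w | pair_div w \in N].

Lemma mem_fact_pairs x y :
  ((x, y) \in fact_pairs) = [&& x \in X, y \in Y & x * y^-1 \in N].
Proof. by rewrite !inE andbA. Qed.

Lemma pair_divM w1 w2 : pair_div (w1 * w2) = pair_div w2 ^ w1.1^-1 * pair_div w1.
Proof. by rewrite /pair_div /= conjgE invgK invMg !mulgA mulgKV. Qed.

Hypothesis nNX : X \subset 'N(N).

Lemma group_set_fact_pairs : group_set fact_pairs.
Proof.
apply/group_setP; split=> [|[x1 y1] [x2 y2]].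
  by rewrite -[1]/(1, 1) mem_fact_pairs mulgV !group1.
rewrite !mem_fact_pairs => /and3P[Xx1 Yy1 Nw1] /and3P[Xx2 Yy2 Nw2].
apply/and3P; split; [exact: groupM | exact: groupM |].
have := pair_divM (x1, y1) (x2, y2); rewrite /pair_div /= => ->.
by rewrite groupM // memJ_norm // groupV (subsetP nNX).
Qed.

Canonical fact_pairs_group := Group group_set_fact_pairs.

Lemma pair_div_inj : X :&: Y = 1 -> {in fact_pairs &, injective pair_div}.
Proof.
move=> tiXY [x1 y1] [x2 y2]; rewrite !mem_fact_pairs.
case/and3P=> Xx1 Yy1 _ /and3P[Xx2 Yy2 _]; rewrite /pair_div /= => eq_div.
have eq_quo : x2^-1 * x1 = y2^-1 * y1.
  by rewrite -[x1](mulgKV y1) eq_div !mulgA mulVg mul1g.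
have /set1gP : x2^-1 * x1 \in [1] by rewrite -tiXY inE {2}eq_quo !groupM ?groupV.
move=> x12_1; move: eq_quo; rewrite x12_1 => /esym/eqP.
by move/eqP: x12_1; rewrite -!eq_mulVg1 => /eqP-> /eqP->.
Qed.

Lemma pair_div_fact_pairs : N \subset X * Y -> pair_div @: fact_pairs = N.
Proof.
move=> sNXY; apply/eqP; rewrite eqEsubset; apply/andP; split.
  by apply/subsetP=> _ /imsetP[[x y] + ->]; rewrite mem_fact_pairs => /and3P[].
apply/subsetP=> t Nt; have /mulsgP[x y Xx Yy def_t] := subsetP sNXY t Nt.
apply/imsetP; exists (x, y^-1); last by rewrite /pair_div /= invgK.
by rewrite mem_fact_pairs invgK -def_t Xx groupV Yy.
Qed.

Hypothesis nNY : Y \subset 'N(N).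

Lemma subdirect_fact_pairs : X * N = Y * N -> subdirect X Y fact_pairs_group.
Proof.
move=> eqXYN; split; first exact: subsetIl.
- apply/eqP; rewrite eqEsubset; apply/andP; split.
    by apply/subsetP=> _ /imsetP[[x y] + ->]; rewrite mem_fact_pairs => /and3P[].
  apply/subsetP=> x Xx; have : x \in Y * N by rewrite -eqXYN -[x]mulg1 mem_mulg.
  case/mulsgP=> y t Yy Nt def_x; apply/imsetP; exists (x, y) => //.
  rewrite mem_fact_pairs Xx Yy def_x -mulgA -{1}[y]invgK -conjgE memJ_norm ?groupV //.
  exact: (subsetP nNY).
- apply/eqP; rewrite eqEsubset; apply/andP; split.
    by apply/subsetP=> _ /imsetP[[x y] + ->]; rewrite mem_fact_pairs => /and3P[].
  apply/subsetP=> y Yy; have : y \in X * N by rewrite eqXYN -[y]mulg1 mem_mulg.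
  case/mulsgP=> x t Xx Nt def_y; apply/imsetP; exists (x, y) => //.
  rewrite mem_fact_pairs Xx Yy def_y invMg -{1}[x]invgK -conjgE memJ_norm ?groupV //.
  exact: (subsetP nNX).
Qed.

End FactorizationPairs.

Arguments pair_div {hT} w.

Section TransportGroupLaw.

Variables (T : Type) (wT : finGroupType) (W : {group wT}).
Variables (psi : T -> wT) (phi : wT -> T).
Hypotheses (psiW : forall a, psi a \in W) (psiK : cancel psi phi).
Hypothesis phiK : {in W, cancel phi psi}.

Definition transport_mul a b := phi (psi a * psi b).
Definition transport_one := phi 1.
Definition transport_inv a := phi (psi a)^-1.

Lemma transport_mulE a b : psi (transport_mul a b) = psi a * psi b.
Proof. by rewrite phiK ?groupM. Qed.

Lemma transport_group_law : group_law transport_mul transport_one transport_inv.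
Proof.
have psi1 : psi transport_one = 1 by rewrite phiK.
have psiV a : psi (transport_inv a) = (psi a)^-1 by rewrite phiK ?groupV.
split=> [a b c|a|a|a|a]; apply: (can_inj psiK);
  by rewrite !transport_mulE ?psi1 ?psiV ?mulgA ?mul1g ?mulg1 ?mulVg ?mulgV.
Qed.

Lemma iso_transport : iso_to_group transport_mul W.
Proof.
exists psi; split=> [||w Ww|] //; first exact: can_inj psiK.
  by exists (phi w); rewrite phiK.
exact: transport_mulE.
Qed.

End TransportGroupLaw.

Section SkewBraceOfFactorization.

Variables (hT : finGroupType) (X Y N : {group hT}).
Hypothesis nNX : X \subset 'N(N).
Hypotheses (tiXY : X :&: Y = 1) (sNXY : N \subset X * Y).
Variables (T : finGroupType) (f : T -> hT).
Hypotheses (fM : {morph f : a b / a * b}) (f_inj : injective f).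
Hypothesis im_f : f @: [set: T] = N.

Let W := fact_pairs_group Y nNX.

Definition fact_lift a := odflt 1 [pick w in fact_pairs X Y N | pair_div w == f a].

Definition fact_proj w := odflt 1 [pick a | f a == pair_div w].

Lemma fact_liftP a : fact_lift a \in W /\ pair_div (fact_lift a) = f a.
Proof.
rewrite /fact_lift; case: pickP => [w /andP[Ww /eqP] // | no_w].
have : f a \in pair_div @: fact_pairs X Y N.
  by rewrite pair_div_fact_pairs // -im_f imset_f ?inE.
by case/imsetP=> w Ww def_fa; move: (no_w w); rewrite /= Ww def_fa eqxx.
Qed.

Lemma fact_projE w : w \in W -> f (fact_proj w) = pair_div w.
Proof.
move=> Ww; rewrite /fact_proj; case: pickP => [a /eqP // | no_a].
have : pair_div w \in f @: [set: T].
  by rewrite im_f -(pair_div_fact_pairs sNXY) imset_f.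
by case/imsetP=> a _ def_w; move: (no_a a); rewrite /= def_w eqxx.
Qed.

Lemma fact_liftK : cancel fact_lift fact_proj.
Proof. by move=> a; apply: f_inj; have [Wa <-] := fact_liftP a; rewrite fact_projE. Qed.

Lemma fact_projK : {in W, cancel fact_proj fact_lift}.
Proof.
move=> w Ww; have [Wpw div_pw] := fact_liftP (fact_proj w).
by apply: (pair_div_inj (N := N) tiXY) => //; rewrite div_pw fact_projE.
Qed.

Let fact_mul := transport_mul fact_lift fact_proj.

Lemma fact_mulE a b : f (fact_mul a b) = f b ^ (fact_lift a).1^-1 * f a.
Proof.
have [[Wa div_a] [Wb div_b]] := (fact_liftP a, fact_liftP b).
by rewrite fact_projE ?groupM // pair_divM div_a div_b.
Qed.

Theorem skew_brace_of_factorization :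
  is_skew_brace *%g 1 inv fact_mul (transport_one fact_proj)
    (transport_inv fact_lift fact_proj) /\ iso_to_group fact_mul W.
Proof.
have liftW a : fact_lift a \in W by have [] := fact_liftP a.
have f1 : f 1 = 1 by apply: (mulgI (f 1)); rewrite -fM !mulg1.
split; last exact: iso_transport liftW fact_liftK fact_projK.
split; last first.
- move=> a b c; apply: f_inj; rewrite !fM !fact_mulE fM conjMg.
  by rewrite -[_ * f a * f a^-1]mulgA -fM mulgV f1 mulg1 -mulgA.
- exact: transport_group_law liftW fact_liftK fact_projK.
- split; [exact: mulgA | exact: mul1g | exact: mulg1 | exact: mulVg | exact: mulgV].
Qed.

End SkewBraceOfFactorization.

Theorem mainTheorem2 (gT : finGroupType) (K : {group gT})
  (X Y : {group {perm gT}}) :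
  'Z(K) = 1 ->
  X \subset Aut K -> Y \subset Aut K ->
  X :&: Y = 1 ->
  X * Y = X * Inn K -> X * Inn K = Y * Inn K ->
  exists (T : Type) (add : T -> T -> T) (zero : T) (opp : T -> T)
         (mul : T -> T -> T) (one : T) (inv : T -> T),
    [/\ is_skew_brace add zero opp mul one inv,
        iso_to_group add K &
        exists W : {group ({perm gT} * {perm gT})},
          subdirect X Y W /\ iso_to_group mul W].
Proof.
move=> ZK1 sXAut sYAut tiXY eqXY eqXYInn.
have nInnX := subset_trans sXAut (Aut_norm_Inn K).
have nInnY := subset_trans sYAut (Aut_norm_Inn K).
have sInnXY : Inn K \subset X * Y by rewrite eqXY mulG_subr.
have [brace iso_mul] := skew_brace_of_factorization nInnX tiXY sInnXY
  (@inn_subgM _ K) (inn_subg_inj ZK1) (im_inn_subg K).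
exists (subg_of K), *%g, 1, inv; do 3 eexists; split; [exact: brace | exact: iso_subg |].
by exists (fact_pairs_group Y nInnX); split; [exact: subdirect_fact_pairs | exact: iso_mul].
Qed.
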